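(* For entitlements $e_1,\dots,e_n>0$ with $\sum_ie_i=1$ and any reported demands $d_1,\dots,d_n\ge0$, if $d_i<e_i$ then the MMF allocation to agent $i$ equals $d_i$.
   Context: MMF$(e,d)$: set $r=1$, $E=1$, $S=\{1,\dots,n\}$, $a=0$; process agents $j$ in ascending order of $d_j/e_j$; if $d_j<re_j/E$, set $a_j=d_j$, remove $j$ from $S$, $r\leftarrow r-d_j$, $E\leftarrow E-e_j$ and continue; otherwise set $a_k=re_k/E$ for all $k\in S$ and stop; output $a$. *)

From mathcomp Require Import all_boot all_order all_algebra.
Set Implicit Arguments. Unset Strict Implicit. Unset Printing Implicit Defensive.
Import Order.TTheory GRing.Theory Num.Theory.
Local Open Scope ring_scope.

(* The MMF(e,d) procedure, run along a processing order [s] (a sequence of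
   the still-unprocessed agents, i.e. the current set S listed in the order
   they are processed).  [r] is the remaining resource, [E] the remaining
   entitlement. *)
Fixpoint mmf_loop (R : realFieldType) (n : nat) (e d : 'I_n -> R)
    (s : seq 'I_n) (r E : R) : 'I_n -> R :=
  match s with
  | [::] => fun _ => 0
  | j :: s' =>
      if d j < r * e j / E then
        (fun k => if k == j then d j else mmf_loop e d s' (r - d j) (E - e j) k)
      else
        (fun k => if k \in j :: s' then r * e k / E else 0)
  end.

Definition MMF (R : realFieldType) (n : nat) (e d : 'I_n -> R)
    (s : seq 'I_n) : 'I_n -> R := mmf_loop e d s 1 1.

Definition mmf_order (R : realFieldType) (n : nat) (e d : 'I_n -> R)
    (s : seq 'I_n) : Prop :=
  perm_eq s (enum 'I_n) /\ sorted (fun i j => d i / e i <= d j / e j) s.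

From mathcomp Require Import all_boot all_order all_algebra.
Import Order.TTheory GRing.Theory Num.Theory.
Local Open Scope ring_scope.

(* Every agent j processed before i has d_j/e_j <= d_i/e_i < 1, i.e.
   d_j < e_j.  Serving j lowers the remaining resource r by d_j and the
   remaining entitlement E by the larger e_j, so the invariant E <= r is
   preserved.  When i is reached its threshold r e_i / E is at least
   e_i > d_i, so i receives exactly its demand. *)

Section MMFLoop.

Variables (R : realFieldType) (n : nat) (e d : 'I_n -> R).
Hypothesis e_gt0 : forall j, 0 < e j.

Lemma ratio_lt1 j : (d j / e j < 1) = (d j < e j).
Proof. by rewrite ltr_pdivrMr // mul1r. Qed.

Lemma lt_share j r E : 0 < E -> E <= r -> d j < e j -> d j < r * e j / E.
Proof.
move=> E_gt0 le_Er lt_de; apply: (lt_le_trans lt_de).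
by rewrite ler_pdivlMr // mulrC ler_wpM2r // ltW.
Qed.

Lemma mmf_loop_demand (i : 'I_n) s r E :
  d i < e i -> i \in s -> sorted (fun j k => d j / e j <= d k / e k) s ->
  E = \sum_(j <- s) e j -> E <= r ->
  mmf_loop e d s r E i = d i.
Proof.
move=> lt_de_i; elim: s r E => [|j s IHs] r E //= i_in sorted_js E_sum le_Er.
have E_gt0 : 0 < E.
  by rewrite E_sum big_cons ltr_wpDr // sumr_ge0 // => k _; apply: ltW.
have [<-|neq_ij] := eqVneq i j; first by rewrite lt_share // eqxx.
have i_in_s : i \in s by move: i_in; rewrite inE (negbTE neq_ij).
have le_ratio_ji : d j / e j <= d i / e i.
  have ratio_trans : transitive (fun x y => d x / e x <= d y / e y).
    by move=> y x z; apply: le_trans.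
  by have /allP := order_path_min ratio_trans sorted_js; apply.
have lt_de_j : d j < e j by rewrite -ratio_lt1 (le_lt_trans le_ratio_ji) ?ratio_lt1.
rewrite lt_share // (negbTE neq_ij); apply: IHs => //.
- exact: path_sorted sorted_js.
- by rewrite E_sum big_cons addrAC subrr add0r.
- by rewrite lerD // lerN2 ltW.
Qed.

End MMFLoop.

Theorem mainTheorem12 (R : realFieldType) (n : nat) (e d : 'I_n -> R)
    (s : seq 'I_n) (i : 'I_n) :
  (forall j, 0 < e j) ->
  \sum_(j < n) e j = 1 ->
  (forall j, 0 <= d j) ->
  mmf_order e d s ->
  d i < e i ->
  MMF e d s i = d i.
Proof.
move=> e_gt0 e_sum1 _ [perm_s sorted_s] lt_de_i.
apply: mmf_loop_demand => //.
- by rewrite (perm_mem perm_s) mem_enum.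
- by rewrite -e_sum1 (perm_big _ perm_s) /= big_enum.
Qed.
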